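(* Let $\Omega\subset\mathbb H^n$ be an open set and let $u:\Omega\to\mathbb R$ be continuous with $\partial_Hu(\xi)\neq\emptyset$ for every $\xi\in\Omega$. Then the set-valued map $\partial_Hu:\Omega\to 2^{\mathbb R^{2n}}$ is upper semicontinuous on $\Omega$. Moreover, for every compact set $K\subset\Omega$, the set $\partial_Hu(K)$ is compact.
   Context: $\mathbb H^n=\mathbb C^n\times\mathbb R\cong\mathbb R^{2n+1}$ with real coordinates $(x,y,t)$, $z=x+iy$, group law $(z,t)\circ(z',t')=(z+z',t+t'+2\,\mathrm{Im}\langle z,z'\rangle)$, $\langle z,z'\rangle=\sum_j z_j\overline{z'_j}$. Horizontal plane at $\xi_0=(x_0,y_0,t_0)$: $H_{\xi_0}=\{(x,y,t):t=t_0+2(x\cdot y_0-x_0\cdot y)\}$. $\mathrm{Pr}_1(x,y,t)=(x,y)$. For $\xi_0\in\Omega$, $\partial_Hu(\xi_0)=\{p\in\mathbb R^{2n}:u(\xi)\ge u(\xi_0)+p\cdot(\mathrm{Pr}_1(\xi)-\mathrm{Pr}_1(\xi_0))\ \forall\xi\in\Omega\cap H_{\xi_0}\}$ (a compact convex set), and $\partial_Hu(K)=\bigcup_{\xi\in K}\partial_Hu(\xi)$. A set-valued map $F$ with nonempty compact values is upper semicontinuous at $x$ if for every $\varepsilon>0$ there is $\delta>0$ such that $F(x')$ is contained in the $\varepsilon$-neighbourhood of $F(x)$ whenever $x'$ is within distance $\delta$ of $x$. *)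

From HB Require Import structures.
From mathcomp Require Import all_boot all_order all_algebra.
From mathcomp Require Import all_classical all_reals all_analysis.
Set Implicit Arguments. Unset Strict Implicit. Unset Printing Implicit Defensive.
Import Order.TTheory GRing.Theory Num.Theory.
Import numFieldNormedType.Exports.
Local Open Scope classical_set_scope.
Local Open Scope ring_scope.

(* The Heisenberg group H^n = C^n x R ~ R^{2n+1}, points ((x, y), t)
   with x, y in R^n (row vectors) and t in R; z = x + i y. *)
Notation Hn R n := (('rV[R]_n * 'rV[R]_n) * R)%type.

Notation R2n R n := ('rV[R]_n * 'rV[R]_n)%type.

Definition dotv (R : realType) (n : nat) (a b : 'rV[R]_n) : R :=
  \sum_(i < n) a 0 i * b 0 i.

Definition Pr1 (R : realType) (n : nat) (xi : Hn R n) : R2n R n := xi.1.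

Definition dot2 (R : realType) (n : nat) (p q : R2n R n) : R :=
  dotv p.1 q.1 + dotv p.2 q.2.

Definition hplane (R : realType) (n : nat) (xi0 : Hn R n) : set (Hn R n) :=
  [set xi | xi.2 = xi0.2 + 2 * (dotv xi.1.1 xi0.1.2 - dotv xi0.1.1 xi.1.2)].

Definition hsubdiff (R : realType) (n : nat) (Omega : set (Hn R n))
    (u : Hn R n -> R) (xi0 : Hn R n) : set (R2n R n) :=
  [set p | forall xi, Omega xi -> hplane xi0 xi ->
     u xi0 + dot2 p (Pr1 xi - Pr1 xi0) <= u xi].

Definition hsubdiff_set (R : realType) (n : nat) (Omega : set (Hn R n))
    (u : Hn R n -> R) (K : set (Hn R n)) : set (R2n R n) :=
  \bigcup_(xi in K) hsubdiff Omega u xi.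

Definition dist2n (R : realType) (n : nat) (p q : R2n R n) : R :=
  Num.sqrt (dot2 (p - q) (p - q)).

Definition distH (R : realType) (n : nat) (xi eta : Hn R n) : R :=
  Num.sqrt (dot2 (Pr1 xi - Pr1 eta) (Pr1 xi - Pr1 eta) + (xi.2 - eta.2) ^+ 2).

Definition eps_nbhd (R : realType) (n : nat) (A : set (R2n R n)) (eps : R)
  : set (R2n R n) :=
  [set q | exists2 p, A p & dist2n p q < eps].

Definition usc_at (R : realType) (n : nat) (Omega : set (Hn R n))
    (F : Hn R n -> set (R2n R n)) (x : Hn R n) : Prop :=
  forall eps : R, 0 < eps -> exists2 delta : R, 0 < delta &
    forall x', Omega x' -> distH x x' < delta -> F x' `<=` eps_nbhd (F x) eps.

From HB Require Import structures.
From mathcomp Require Import all_boot all_order all_algebra.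
From mathcomp Require Import all_classical all_reals all_analysis.
From mathcomp Require Import lra.
Import Order.TTheory GRing.Theory Num.Theory.
Import numFieldNormedType.Exports.
Local Open Scope classical_set_scope.
Local Open Scope ring_scope.

(* A subgradient p at x' can be tested at the point of the horizontal plane
   H_{x'} lying over Pr1 x' + h p/|p|.  That point depends continuously on
   x' and on the displacement, so continuity of u bounds h |p| by the
   oscillation of u near x: the subdifferential is locally bounded.  If p is
   not a subgradient at x, the subgradient inequality fails at some point of
   H_x over a horizontal position q; the point of H_{x'} over q moves
   continuously with x', so the failure persists for (x', p') near (x, p):
   the graph of the subdifferential is closed.  Local boundedness and a closed
   graph give upper semicontinuity by compactness of closed balls, and
   partial_H u (K) is the projection of a closed subset of K times a ball. *)

Section HorizontalSubdifferential.
Context {R : realType} {n : nat}.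
Implicit Types (v : 'rV[R]_n) (p q : R2n R n) (x y : Hn R n).

Lemma dotv_ge0 v : 0 <= dotv v v.
Proof. by apply: sumr_ge0 => i _; rewrite -expr2 sqr_ge0. Qed.

Lemma coord_sqr_le_dotv v i : v 0 i ^+ 2 <= dotv v v.
Proof.
rewrite /dotv (bigD1 i) //= -expr2 lerDl.
by apply: sumr_ge0 => j _; rewrite -expr2 sqr_ge0.
Qed.

Lemma dotvZr v w (k : R) : dotv v (k *: w) = k * dotv v w.
Proof.
by rewrite /dotv mulr_sumr; apply: eq_bigr => i _; rewrite mxE mulrCA.
Qed.

Lemma dot2Zr p q (k : R) : dot2 p (k *: q) = k * dot2 p q.
Proof. by rewrite /dot2 !dotvZr mulrDr. Qed.

(* The norms on 'rV and on pairs are sup norms; dist2n and distH are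
   Euclidean. *)
Lemma mx_norm_le_sqrt v s : dotv v v <= s -> `|v| <= Num.sqrt s.
Proof.
move=> vs; rewrite [leLHS]/Num.norm /= mx_normrE.
apply: bigmax_le => // -[a i] _ /=; rewrite (ord1 a) -sqrtr_sqr.
rewrite ler_sqrt ?(le_trans (dotv_ge0 v)) //.
exact: le_trans (coord_sqr_le_dotv v i) vs.
Qed.

Lemma pair_norm_le {U V : normedModType R} (z : U * V) c :
  `|z.1| <= c -> `|z.2| <= c -> `|z| <= c.
Proof. by rewrite prod_normE ge_max => -> ->. Qed.

Lemma norm_le_sqrt_dot2 p : `|p| <= Num.sqrt (dot2 p p).
Proof.
have := dotv_ge0 p.1; have := dotv_ge0 p.2.
by move=> ? ?; apply: pair_norm_le; apply: mx_norm_le_sqrt; rewrite /dot2; lra.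
Qed.

Lemma dot2_ge0 p : 0 <= dot2 p p.
Proof. by rewrite addr_ge0 // dotv_ge0. Qed.

Lemma sqr_norm_le_dot2 p : `|p| ^+ 2 <= dot2 p p.
Proof.
by rewrite -(sqr_sqrtr (dot2_ge0 p)) lerXn2r ?nnegrE ?norm_le_sqrt_dot2.
Qed.

Lemma norm_le_distH x y : `|x - y| <= distH x y.
Proof.
have := sqr_ge0 (x.2 - y.2); have := dot2_ge0 (Pr1 x - Pr1 y).
rewrite /distH => ? ?; apply: pair_norm_le.
  by apply: le_trans (norm_le_sqrt_dot2 _) _; rewrite ler_sqrt; lra.
by rewrite -sqrtr_sqr ler_sqrt; lra.
Qed.

Lemma rV_norm_ball_compact (M : R) : compact [set v : 'rV[R]_n | `|v| <= M].
Proof.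
apply: bounded_closed_compact.
  exists M; split; first exact: num_real.
  by move=> N MN v /= vM; rewrite (le_trans vM) ?ltW.
have -> : [set v : 'rV[R]_n | `|v| <= M] = closed_ball_ Num.norm 0 M.
  by apply/seteqP; split => v; rewrite /closed_ball_ /= sub0r normrN.
exact: closed_closed_ball_.
Qed.

Lemma norm_ball_compact (M : R) : compact [set p : R2n R n | `|p| <= M].
Proof.
have -> : [set p : R2n R n | `|p| <= M] =
    [set v : 'rV[R]_n | `|v| <= M] `*` [set v : 'rV[R]_n | `|v| <= M].
  by apply/seteqP; split => p /=; rewrite prod_normE ge_max => /andP.
exact: compact_setX (rV_norm_ball_compact M) (rV_norm_ball_compact M).
Qed.

Lemma dotv_continuous :
  continuous (fun vw : 'rV[R]_n * 'rV[R]_n => dotv vw.1 vw.2).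
Proof.
rewrite /dotv; apply: (@continuous_big _ _ +%R) => [|i _ vw].
  exact: add_continuous.
apply: continuousM.
  by apply: (@continuous_comp _ _ _ fst (fun v : 'rV[R]_n => v 0 i));
    [exact: cvg_fst | exact: coord_continuous].
by apply: (@continuous_comp _ _ _ snd (fun v : 'rV[R]_n => v 0 i));
  [exact: cvg_snd | exact: coord_continuous].
Qed.

Lemma continuous_dotv {T : topologicalType} (f g : T -> 'rV[R]_n) :
  continuous f -> continuous g -> continuous (fun z => dotv (f z) (g z)).
Proof.
move=> cf cg z.
apply: (@continuous_comp _ _ _ (fun z => (f z, g z))
  (fun vw => dotv vw.1 vw.2)).
  exact: (cvg_pair (cf z) (cg z)).
exact: dotv_continuous.
Qed.

Lemma continuous_dot2 {T : topologicalType} (f g : T -> R2n R n) :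
  continuous f -> continuous g -> continuous (fun z => dot2 (f z) (g z)).
Proof.
move=> cf cg.
have c1 : continuous (fun z => dotv (f z).1 (g z).1).
  by apply: continuous_dotv => z; [exact: cvg_comp (cf z) cvg_fst |
                                   exact: cvg_comp (cg z) cvg_fst].
have c2 : continuous (fun z => dotv (f z).2 (g z).2).
  by apply: continuous_dotv => z; [exact: cvg_comp (cf z) cvg_snd |
                                   exact: cvg_comp (cg z) cvg_snd].
by move=> z; exact: cvgD (c1 z) (c2 z).
Qed.

Lemma dist2n_refl p : dist2n p p = 0.
Proof.
rewrite /dist2n subrr /dot2 /dotv !big1 ?addr0 ?sqrtr0 // => i _.
by rewrite mxE mul0r.
Qed.

Lemma dist2n_near p (eps : R) : 0 < eps -> \forall q \near p, dist2n p q < eps.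
Proof.
have c : {for p, continuous (dist2n p)}.
  apply: continuous_comp; last exact: sqrt_continuous.
  by apply: continuous_dot2 => q; apply: cvgB => //; exact: cvg_cst.
by have := cvgr_lt _ c; rewrite dist2n_refl; apply.
Qed.

Definition hlift x q : Hn R n :=
  (q, x.2 + 2 * (dotv q.1 x.1.2 - dotv x.1.1 q.2)).

Lemma hlift_hplane x q : hplane x (hlift x q).
Proof. by []. Qed.

Lemma hlift_Pr1 x y : hplane x y -> hlift x (Pr1 y) = y.
Proof. by case: y => [[a b] t]; rewrite /hplane /= => ->. Qed.

Lemma hlift_id x : hlift x (Pr1 x) = x.
Proof. by apply: hlift_Pr1; rewrite /hplane /= subrr mulr0 addr0. Qed.

Lemma hlift_continuous : continuous (fun z : Hn R n * R2n R n => hlift z.1 z.2).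
Proof.
have c11 : continuous (fun z : Hn R n * R2n R n => z.1.1).
  by move=> z; apply: cvg_comp cvg_fst cvg_fst.
have d1 : continuous (fun z : Hn R n * R2n R n => dotv z.2.1 z.1.1.2).
  apply: continuous_dotv => z; first exact: cvg_comp cvg_snd cvg_fst.
  exact: cvg_comp (c11 z) cvg_snd.
have d2 : continuous (fun z : Hn R n * R2n R n => dotv z.1.1.1 z.2.2).
  apply: continuous_dotv => z; first exact: cvg_comp (c11 z) cvg_fst.
  exact: cvg_comp cvg_snd cvg_snd.
have vert : continuous (fun z : Hn R n * R2n R n =>
    z.1.2 + 2 * (dotv z.2.1 z.1.1.2 - dotv z.1.1.1 z.2.2)).
  move=> z; apply: cvgD; first exact: cvg_comp cvg_fst cvg_snd.
  by apply: cvgMl_tmp; apply: cvgB; [exact: d1 | exact: d2].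
by move=> z; exact: cvg_pair cvg_snd (vert z).
Qed.

Section Subdifferential.
Variables (Omega : set (Hn R n)) (u : Hn R n -> R).
Hypotheses (Omega_open : open Omega) (u_cont : {within Omega, continuous u}).

Lemma hsubdiff_hlift {x p q} :
  hsubdiff Omega u x p -> Omega (hlift x q) ->
  u x + dot2 p (q - Pr1 x) <= u (hlift x q).
Proof. by move=> /(_ _ _ (hlift_hplane x q)); apply. Qed.

Lemma continuous_at_Omega x : Omega x -> {for x, continuous u}.
Proof.
move=> Ox; move: u_cont; rewrite (continuous_open_subspace _ Omega_open).
by apply; rewrite inE.
Qed.

Lemma hsubdiff_locally_bounded x : Omega x ->
  exists M, \forall x' \near x, hsubdiff Omega u x' `<=` [set p | `|p| <= M].
Proof.
move=> Ox.
have near_x : \forall y \near x, Omega y /\ `|u x - u y| < 1.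
  apply: filterI; first exact: Omega_open.
  exact: (@cvgr_dist_lt _ R^o _ _ _ u _ (continuous_at_Omega _ Ox) _ ltr01).
pose probe z := hlift z.1 (Pr1 z.1 + z.2) : Hn R n.
pose z0 : Hn R n * R2n R n := (x, 0).
have probe_cont : {for z0, continuous probe}.
  apply: (@continuous_comp _ _ _
    (fun z : Hn R n * R2n R n => (z.1, Pr1 z.1 + z.2))
    (fun w : Hn R n * R2n R n => hlift w.1 w.2)); last exact: hlift_continuous.
  have shift : (fun z : Hn R n * R2n R n => Pr1 z.1 + z.2) @ nbhs z0 -->
      Pr1 x + 0.
    by apply: cvgD; [exact: cvg_comp cvg_fst cvg_fst | exact: cvg_snd].
  exact: cvg_pair cvg_fst shift.
have [[A B] [Ax B0] AB] :
    \forall z \near z0, Omega (probe z) /\ `|u x - u (probe z)| < 1.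
  have near_probe : nbhs (probe z0) [set y | Omega y /\ `|u x - u y| < 1].
    by rewrite /probe /= addr0 hlift_id; exact: near_x.
  exact: probe_cont near_probe.
have /nbhs_normP [r /= r0 Br] := B0.
pose h := r / 2.
have h0 : 0 < h by rewrite divr_gt0.
exists (2 / h); near=> x' => p hp /=.
have [Ox' ux'] : Omega x' /\ `|u x - u x'| < 1 by near: x'.
have [->|p0] := eqVneq p 0; first by rewrite normr0 ltW // divr_gt0.
have np0 : 0 < `|p| by rewrite normr_gt0.
(* The displacement d has length h < r, and the subgradient inequality at
   probe (x', d) reads h |p| <= u (probe (x', d)) - u x' < 2. *)
pose d := (h / `|p|) *: p.
have [Oprobe u_probe] : Omega (probe (x', d)) /\ `|u x - u (probe (x', d))| < 1.
  apply: (AB (x', d)); split; first by near: x'.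
  apply: Br; rewrite /ball_ /= sub0r normrN normrZ gtr0_norm ?divr_gt0 //.
  by rewrite divfK ?gt_eqF // /h; lra.
have := hsubdiff_hlift hp Oprobe; rewrite [X in dot2 _ X]addrC addKr /d dot2Zr.
have : h * `|p| <= h / `|p| * dot2 p p.
  have -> : h * `|p| = h / `|p| * `|p| ^+ 2.
    by rewrite expr2 mulrA divfK // gt_eqF.
  by rewrite ler_wpM2l ?sqr_norm_le_dot2 // divr_ge0 // ltW.
move: ux' u_probe; rewrite !ltr_norml => /andP[? ?] /andP[? ?] ? ?.
by rewrite ler_pdivlMr // mulrC; lra.
Unshelve. all: by end_near.
Qed.

Lemma hsubdiff_closed_graph x p : Omega x -> ~ hsubdiff Omega u x p ->
  \forall p' \near p & x' \near x, ~ hsubdiff Omega u x' p'.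
Proof.
move=> Ox hp.
have [eta [Oeta heta below]] : exists eta,
    [/\ Omega eta, hplane x eta & u eta < u x + dot2 p (Pr1 eta - Pr1 x)].
  apply: contrapT => none; apply: hp => y Oy hy.
  by rewrite leNgt; apply/negP => lt_y; apply: none; exists y.
set q := Pr1 eta in below; have etaE : hlift x q = eta by exact: hlift_Pr1.
pose lift (z : R2n R n * Hn R n) := hlift z.2 q.
have lift_cont : {for (p, x), continuous lift}.
  apply: (@continuous_comp _ _ _ (fun z : R2n R n * Hn R n => (z.2, q))
    (fun w : Hn R n * R2n R n => hlift w.1 w.2)); last exact: hlift_continuous.
  exact: cvg_pair cvg_snd (cvg_cst q).
have near_Omega : \forall z \near (p, x), Omega (lift z).
  apply: lift_cont; rewrite /lift /= etaE; exact: Omega_open.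
pose gap (z : R2n R n * Hn R n) := u z.2 + dot2 z.1 (q - Pr1 z.2) - u (lift z).
have u_lift : {for (p, x), continuous (u \o lift)}.
  apply: continuous_comp lift_cont _; rewrite /lift /= etaE.
  exact: continuous_at_Omega.
have gap_cont : {for (p, x), continuous gap}.
  apply: cvgB; last exact: u_lift.
  have u_snd : {for (p, x), continuous (u \o snd)}.
    apply: (@continuous_comp _ _ _ snd u); first exact: cvg_snd.
    exact: continuous_at_Omega.
  apply: cvgD; first exact: u_snd.
  apply: continuous_dot2 => z; first exact: cvg_fst.
  by apply: cvgB; [exact: cvg_cst | exact: cvg_comp cvg_snd cvg_fst].
have gap_pos : \forall z \near (p, x), 0 < gap z.
  by apply: cvgr_gt gap_cont _ _; rewrite /gap /lift /= etaE subr_gt0.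
apply: filterS2 near_Omega gap_pos => z Oz gap_z hz.
by have := hsubdiff_hlift hz Oz; rewrite /gap in gap_z; lra.
Qed.

Lemma hsubdiff_near_eps_nbhd x (eps : R) : Omega x -> 0 < eps ->
  \forall x' \near x,
    hsubdiff Omega u x' `<=` eps_nbhd (hsubdiff Omega u x) eps.
Proof.
move=> Ox eps0; have [M bounded] := hsubdiff_locally_bounded x Ox.
pose close x' p' :=
  hsubdiff Omega u x' p' -> eps_nbhd (hsubdiff Omega u x) eps p'.
have cover p : `|p| <= M -> \forall p' \near p & x' \near x, close x' p'.
  move=> _; have [hp|hp] := pselect (hsubdiff Omega u x p); last first.
    by apply: filterS (hsubdiff_closed_graph x p Ox hp) => z /= not_hz /not_hz.
  exists ([set q | dist2n p q < eps], setT).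
    by split; [exact: dist2n_near | exact: filterT].
  by move=> [p' x'] /= [pp' _] _; exists p.
have near_close : \forall x' \near x, [set p | `|p| <= M] `<=` close x'.
  exact: (compact_near_coveringP _).1 (norm_ball_compact M) _ _ close _ cover.
apply: filterS2 bounded near_close => x' bnd cls p' hp'.
exact: cls p' (bnd p' hp') hp'.
Qed.

Lemma hsubdiff_usc x : Omega x -> usc_at Omega (hsubdiff Omega u) x.
Proof.
move=> Ox eps eps0.
have /nbhs_normP [d /= d0 near_d] := hsubdiff_near_eps_nbhd x eps Ox eps0.
exists d => // x' _ dx'; apply: near_d.
exact: le_lt_trans (norm_le_distH x x') dx'.
Qed.

Lemma hsubdiff_set_bounded K : compact K -> K `<=` Omega ->
  exists M, hsubdiff_set Omega u K `<=` [set p | `|p| <= M].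
Proof.
move=> cK KO.
pose bounded_by M x' := hsubdiff Omega u x' `<=` [set p | `|p| <= M].
have cover x : K x -> \forall x' \near x & M \near +oo, bounded_by M x'.
  move=> Kx; have [M0 near_M0] := hsubdiff_locally_bounded x (KO x Kx).
  exists ([set x' | bounded_by M0 x'], [set M | M0 < M]).
    by split => //; exists M0; split; [exact: num_real | move=> M].
  by move=> [x' M] /= [bx' M0M] p /bx' /le_trans; apply; exact: ltW.
have [M0 [_ near_M]] :=
  (compact_near_coveringP _).1 cK _ (pinfty_nbhs R) bounded_by _ cover.
exists (M0 + 1) => p [x Kx hp].
by apply: (near_M (M0 + 1) _ x Kx p hp); rewrite ltrDl.
Qed.

Lemma hsubdiff_set_compact K : compact K -> K `<=` Omega ->
  compact (hsubdiff_set Omega u K).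
Proof.
move=> cK KO; have [M bounded] := hsubdiff_set_bounded K cK KO.
pose graph := [set z : R2n R n * Hn R n | K z.2 /\ hsubdiff Omega u z.2 z.1].
have -> : hsubdiff_set Omega u K = fst @` graph.
  apply/seteqP; split => [p [x Kx hp]|_ [[p x] [Kx hp] <-]].
    by exists (p, x).
  by exists x.
apply: continuous_compact.
  by apply: continuous_subspaceT => z; exact: cvg_fst.
apply: (@subclosed_compact _ _ ([set p | `|p| <= M] `*` K)); last 2 first.
- exact: compact_setX (norm_ball_compact M) cK.
- by move=> [p x] [Kx hp]; split => //; apply: bounded; exists x.
move=> [p x] cl_px.
have Kx : K x.
  apply: compact_closed (@norm_hausdorff _ _) cK _ _ => B Bx.
  have near_B : nbhs (p, x) (snd @^-1` B) by exact: cvg_snd.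
  by have [[q y] [[Ky _] By]] := cl_px _ near_B; exists y.
split => //; apply: contrapT => hp.
have near_not := hsubdiff_closed_graph x p (KO x Kx) hp.
have [[q y] [[_ hy] not_hy]] := cl_px _ near_not.
exact: not_hy hy.
Qed.
End Subdifferential.
End HorizontalSubdifferential.

Theorem proposition2p2 (R : realType) (n : nat) (Omega : set (Hn R n))
    (u : Hn R n -> R) :
  open Omega ->
  {within Omega, continuous u} ->
  (forall xi, Omega xi -> hsubdiff Omega u xi !=set0) ->
  (forall xi, Omega xi -> usc_at Omega (hsubdiff Omega u) xi) /\
  (forall K : set (Hn R n), compact K -> K `<=` Omega ->
     compact (hsubdiff_set Omega u K)).
Proof.
move=> Omega_open u_cont _; split => [xi|K].
  exact: hsubdiff_usc.
exact: hsubdiff_set_compact.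
Qed.
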